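(* Let $\mathcal{P}$ be a data distribution on $\mathcal{X}\times[C]$, $D_T$ a fixed test set, and $z_i$ a consistently helpful or consistently harmful training point (as defined in the context). For $k\in\{0,\dots,n-1\}$ let $\tau_k=\mathbb{E}_{D_N\sim\mathcal{P}^{n-1}|z_i}[\Delta^{D_N}_{z_i}(k,D_T)]$ and $\delta_k=\mathrm{Var}_{D_N\sim\mathcal{P}^{n-1}|z_i}(\Delta^{D_N}_{z_i}(k,D_T))$, where $D_N\sim\mathcal{P}^{n-1}|z_i$ means $D_N$ consists of $z_i$ and $n-1$ further points drawn i.i.d. from $\mathcal{P}$. Assume $n^{-1}\sum_{k=0}^{n-1}\delta_k\le\delta_{n-1}$ and $|\tau_0|\ge|\tau_1|\ge\dots\ge|\tau_{n-1}|$. Then $$\frac{n^{-1}\sum_{k=0}^{n-1}\delta_k}{\left(n^{-1}\sum_{k=0}^{n-1}\tau_k\right)^2}\le\frac{\delta_{n-1}}{\tau_{n-1}^2}.$$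
   Context: For $S\subseteq N=\{1,\dots,n\}$, $f_S$ is the classifier obtained by training (by a fixed procedure) on $\{z_j:j\in S\}\subseteq D_N$, and $U(S,D_T)=\frac{1}{|D_T|}\sum_{(x_t,y_t)\in D_T}\mathbf{1}[f_S(x_t)=y_t]$. The marginal contribution of $z_i$ to subsets of size $k$ is $\Delta^{D_N}_{z_i}(k,D_T)=\binom{n-1}{k}^{-1}\sum_{S\subseteq N\setminus\{i\},\,|S|=k}\big(U(S\cup\{i\},D_T)-U(S,D_T)\big)$. The point $z_i$ is consistently helpful if $\tau_k\ge0$ for all $k\in\{0,\dots,n-1\}$ and consistently harmful if $\tau_k<0$ for all such $k$. *)

From HB Require Import structures.
From mathcomp Require Import all_boot all_order all_algebra.
From mathcomp Require Import all_classical all_reals.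
From mathcomp Require Import ereal measure_theory.measurable_structure measure
  lebesgue_measure lebesgue_integral probability.

Set Implicit Arguments.
Unset Strict Implicit.
Unset Printing Implicit Defensive.
Import Order.TTheory GRing.Theory Num.Theory.

Local Open Scope classical_set_scope.
Local Open Scope ring_scope.

(* The label set [C] (C classes), represented as 'I_C.-1.+1, which is 'I_C
   whenever 0 < C (assumed in the theorem).  The .-1.+1 form makes the type
   pointed, as required by MathComp-Analysis for measurable types. *)
Definition label (C : nat) := 'I_C.-1.+1.
HB.instance Definition _ C := Finite.on (label C).
HB.instance Definition _ C := isPointed.Build (label C) ord0.
HB.instance Definition _ C := @isMeasurable.Build default_measure_display
  (label C) discrete_measurable discrete_measurable0
  discrete_measurableC discrete_measurableU.

Section defs.
Context {R : realType} {dX : measure_display} {X : measurableType dX} {C : nat}.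
Local Notation Z := (X * label C)%type.

(* U(S, D_T): accuracy on the test set D_T of the classifier obtained by the
   fixed training procedure [train] on the points {z_j : j in S} of the
   training set D_N = (D j)_(j < n) (fed to [train] in increasing index order). *)
Definition utility (train : seq Z -> X -> label C) (DT : seq Z) (n : nat)
    (D : 'I_n -> Z) (S : {set 'I_n}) : R :=
  (\sum_(t <- DT) ((train [seq D j | j <- enum S] t.1 == t.2)%:R : R))
    / (size DT)%:R.

Definition marginal_contribution (train : seq Z -> X -> label C) (DT : seq Z)
    (n : nat) (D : 'I_n -> Z) (i : 'I_n) (k : nat) : R :=
  ('C(n.-1, k)%:R)^-1 *
  \sum_(S : {set 'I_n} | (i \notin S) && (#|S| == k))
     (utility train DT D (i |: S) - utility train DT D S).

(* D_N ~ P^{n-1} | z_i : the random training set D (on the probability space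
   (Omega, Pr)) has z_i at position i, and its other n-1 points are
   measurable random elements, mutually independent, each with law P. *)
Definition sampled_given {dO : measure_display} {Omega : measurableType dO}
    (Pr : probability Omega R) (P : probability Z R) (n : nat) (i : 'I_n)
    (zi : Z) (D : Omega -> 'I_n -> Z) : Prop :=
  [/\ forall w, D w i = zi,
      forall j, j != i -> measurable_fun setT (fun w => D w j)
    & forall A : 'I_n -> set Z, (forall j, measurable (A j)) ->
        Pr [set w | forall j, j != i -> A j (D w j)]
        = (\prod_(j < n | j != i) P (A j))%E].

(* tau_k = E[Delta(k)] and delta_k = Var(Delta(k)) (finite under the
   measurability assumption of the theorem, since Delta is bounded). *)
Definition tau {dO : measure_display} {Omega : measurableType dO}
    (Pr : probability Omega R) (train : seq Z -> X -> label C) (DT : seq Z)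
    (n : nat) (i : 'I_n) (D : Omega -> 'I_n -> Z) (k : nat) : R :=
  fine ('E_Pr[fun w => marginal_contribution train DT (D w) i k])%E.

Definition delta {dO : measure_display} {Omega : measurableType dO}
    (Pr : probability Omega R) (train : seq Z -> X -> label C) (DT : seq Z)
    (n : nat) (i : 'I_n) (D : Omega -> 'I_n -> Z) (k : nat) : R :=
  fine ('V_Pr[fun w => marginal_contribution train DT (D w) i k]).

End defs.

Definition consistently_helpful {R : realType} (t : nat -> R) (n : nat) :=
  forall k, (k < n)%N -> 0 <= t k.
Definition consistently_harmful {R : realType} (t : nat -> R) (n : nat) :=
  forall k, (k < n)%N -> t k < 0.

From HB Require Import structures.
From mathcomp Require Import all_boot all_order all_algebra.
From mathcomp Require Import all_classical all_reals.
From mathcomp Require Import ereal measure_theory.measurable_structure measure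
  lebesgue_measure lebesgue_integral probability.
Import Order.TTheory GRing.Theory Num.Theory.
Local Open Scope classical_set_scope.
Local Open Scope ring_scope.

(* Since the tau_k share a sign and |tau_k| >= |tau_(n-1)| for every k, their
   mean is at least |tau_(n-1)| in absolute value.  Hence the squared mean of
   the tau_k dominates tau_(n-1)^2, while by hypothesis the mean of the
   delta_k is at most delta_(n-1); the quotient inequality follows by
   monotonicity of division (in the extended reals, where x / 0 = x * +oo). *)

Lemma ler_mean (R : numFieldType) (n : nat) (t : nat -> R) (c : R) :
  (0 < n)%N -> (forall k, (k < n)%N -> c <= t k) ->
  c <= n%:R^-1 * \sum_(k < n) t k.
Proof.
move=> n_gt0 c_le_t; rewrite ler_pdivlMl ?ltr0n // mulr_natl.
rewrite -[in c *+ _](card_ord n) -sumr_const.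
by apply: ler_sum => k _; apply: c_le_t.
Qed.

Lemma ler_norm_mean (R : realFieldType) (n : nat) (t : nat -> R) (c : R) :
  (0 < n)%N ->
  (forall k, (k < n)%N -> 0 <= t k) \/ (forall k, (k < n)%N -> t k <= 0) ->
  (forall k, (k < n)%N -> c <= `|t k|) ->
  c <= `|n%:R^-1 * \sum_(k < n) t k|.
Proof.
move=> n_gt0 [t_ge0|t_le0] c_le_t.
  apply: le_trans (ler_norm _); apply: ler_mean => // k lt_kn.
  by rewrite -(ger0_norm (t_ge0 k lt_kn)) c_le_t.
rewrite -normrN -mulrN -sumrN; apply: le_trans (ler_norm _).
apply: (@ler_mean _ _ (fun k => - t k)) => // k lt_kn.
by rewrite -(ler0_norm (t_le0 k lt_kn)) c_le_t.
Qed.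

Lemma lee_fin_div (R : realFieldType) (a b u v : R) :
  0 <= a -> a <= b -> 0 <= v -> v <= u ->
  (a%:E / u%:E <= b%:E / v%:E)%E.
Proof.
move=> a_ge0 le_ab v_ge0 le_vu.
have [v0|v_neq0] := eqVneq v 0.
  rewrite v0 inve0; have [b0|b_neq0] := eqVneq b 0.
    have -> : a = 0 by apply/le_anti; rewrite a_ge0 -b0 le_ab.
    by rewrite b0 !mul0e.
  by rewrite gt0_muley ?leey // lte_fin lt_def b_neq0 (le_trans a_ge0).
have v_gt0 : 0 < v by rewrite lt_def v_neq0.
have u_gt0 : 0 < u := lt_le_trans v_gt0 le_vu.
rewrite !inver !gt_eqF // -!EFinM lee_fin.
by rewrite ler_pM ?invr_ge0 ?(ltW u_gt0) // lef_pV2.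
Qed.

Lemma delta_ge0 (R : realType) (dX : measure_display) (X : measurableType dX)
    (C : nat) (dO : measure_display) (Omega : measurableType dO)
    (Pr : probability Omega R) (train : seq (X * label C) -> X -> label C)
    (DT : seq (X * label C)) (n : nat) (i : 'I_n)
    (D : Omega -> 'I_n -> (X * label C)%type) (k : nat) :
  0 <= delta Pr train DT i D k.
Proof. exact/fine_ge0/variance_ge0. Qed.

Theorem corollary3p5 (R : realType) (dX : measure_display) (X : measurableType dX)
    (C : nat) (hC : (0 < C)%N) (P : probability (X * label C)%type R)
    (dO : measure_display) (Omega : measurableType dO) (Pr : probability Omega R)
    (n : nat) (i : 'I_n) (zi : (X * label C)%type)
    (train : seq (X * label C) -> X -> label C) (DT : seq (X * label C))
    (D : Omega -> 'I_n -> (X * label C)%type) :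
  sampled_given Pr P i zi D ->
  (forall S : {set 'I_n},
     measurable_fun setT (fun w => (utility train DT (D w) S : R))) ->
  consistently_helpful (tau Pr train DT i D) n \/
    consistently_harmful (tau Pr train DT i D) n ->
  n%:R^-1 * \sum_(k < n) delta Pr train DT i D k <= delta Pr train DT i D n.-1 ->
  (forall k, (k.+1 < n)%N ->
     `|tau Pr train DT i D k.+1| <= `|tau Pr train DT i D k|) ->
  ((n%:R^-1 * \sum_(k < n) delta Pr train DT i D k)%:E
     / ((n%:R^-1 * \sum_(k < n) tau Pr train DT i D k) ^+ 2)%:E
   <= (delta Pr train DT i D n.-1)%:E
     / ((tau Pr train DT i D n.-1) ^+ 2)%:E)%E.
Proof.
move=> _ _; case: n i D => [|n] i D same_sign mean_delta_le tau_nonincr.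
  move: mean_delta_le; rewrite big_ord0 mulr0 mul0e => d_ge0.
  by rewrite mule_ge0 // inve_ge0 lee_fin sqr_ge0.
set t := tau Pr train DT i D.
have tau_last_le : forall k, (k < n.+1)%N -> `|t n| <= `|t k|.
  move=> k lt_kn.
  apply: (@homo_leq_in _ (gtn n.+1) t (fun x y => `|y| <= `|x|)) => //.
  - by move=> y x z le_yx le_zy; apply: le_trans le_zy le_yx.
  - by move=> a b _ lt_bn c /andP[_ lt_cb]; apply: ltn_trans lt_cb lt_bn.
  - by move=> a _ lt_a1n; apply: tau_nonincr.
  - by rewrite inE.
apply: lee_fin_div.
- by rewrite mulr_ge0 ?invr_ge0 ?ler0n ?sumr_ge0 // => k _; apply: delta_ge0.
- exact: mean_delta_le.
- exact: sqr_ge0.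
rewrite -(real_normK (num_real (t n))) -[X in _ <= X]real_normK ?num_real //.
rewrite lerXn2r ?nnegrE //; apply: ler_norm_mean => //.
by case: same_sign => [helpful|harmful]; [left | right] => k lt_kn;
  [apply: helpful | apply/ltW/harmful].
Qed.
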